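(* Let $G\in\mathbb{R}^{n\times n}$ be symmetric positive semidefinite. Let $S$ be a random matrix with a finite discrete distribution, $S=S_i\in\mathbb{R}^{n\times q_i}$ with probability $p_i>0$ for $i=1,\dots,r$, and let $\mathbb{S}\eqdef[S_1,\dots,S_r]\in\mathbb{R}^{n\times\sum_i q_i}$. If $$p_i=\frac{\mathrm{Tr}(S_i^\top G^2 S_i)}{\mathrm{Tr}(\mathbb{S}^\top G^2\mathbb{S})},\qquad i=1,\dots,r,$$ then $$\lambda_{\min}^+\Big(G\,\mathbb{E}\big[S(S^\top G^2 S)^\dagger S^\top\big]\,G\Big)\ \ge\ \frac{\lambda_{\min}^+(\mathbb{S}^\top G^2\mathbb{S})}{\mathrm{Tr}(\mathbb{S}^\top G^2\mathbb{S})}.$$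
   Context: $M^\dagger$ is the Moore–Penrose pseudoinverse; $\lambda_{\min}^+(M)$ is the smallest nonzero eigenvalue of a symmetric positive semidefinite matrix $M$. *)

From HB Require Import structures.
From mathcomp Require Import all_boot all_order all_algebra.
From mathcomp Require Import all_classical all_reals.
Set Implicit Arguments. Unset Strict Implicit. Unset Printing Implicit Defensive.
Import Order.TTheory GRing.Theory Num.Theory.
Local Open Scope ring_scope.
Local Open Scope classical_set_scope.

Definition penrose (R : realType) (m k : nat) (A : 'M[R]_(m, k)) (X : 'M[R]_(k, m)) : Prop :=
  [/\ A *m X *m A = A, X *m A *m X = X, (A *m X)^T = A *m X & (X *m A)^T = X *m A].

Definition mp_pinv (R : realType) (m k : nat) (A : 'M[R]_(m, k)) : 'M[R]_(k, m) :=
  xget 0 [set X | penrose A X].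

Definition psd (R : realType) (n : nat) (M : 'M[R]_n) : Prop :=
  M^T = M /\ forall v : 'rV[R]_n, 0 <= (v *m M *m v^T) 0 0.

(* smallest nonzero eigenvalue (for symmetric PSD matrices, the eigenvalues are real) *)
Definition lambda_min_pos (R : realType) (n : nat) (M : 'M[R]_n) : R :=
  inf [set a : R | eigenvalue M a /\ a != 0].

From HB Require Import structures.
From mathcomp Require Import all_boot all_order all_algebra.
From mathcomp Require Import all_classical all_reals.
From mathcomp Require Import complex spectral.
From mathcomp Require Import ring.
Import Order.TTheory GRing.Theory Num.Theory.
Local Open Scope ring_scope.
Set Implicit Arguments. Unset Strict Implicit. Unset Printing Implicit Defensive.

(* Put A_i = G S_i and A = G [S_1 ... S_r] = [A_1 ... A_r]; then G E[S (S^T G^2 S)^+ S^T] G is the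
   mixture M = sum_i p_i P_i of the orthogonal projectors P_i = A_i (A_i^T A_i)^+ A_i^T
   onto the ranges of the A_i.  Cauchy-Schwarz gives |x A_i|^2 <= tr(A_i^T A_i) x P_i x^T,
   so the choice of p_i turns the sum over i into |x A|^2 <= tr(A^T A) x M x^T.  An
   eigenvector x of M for an eigenvalue a <> 0 lies in the range of A, x = w A^T, hence
   with B = A^T A we get |x|^2 = w B w^T and |x A|^2 = w B^2 w^T >= lambda_min^+(B) w B w^T
   by the spectral theorem; together, lambda_min^+(B) |x|^2 <= tr(B) a |x|^2. *)

Section SumsOfSquares.
Variable R : realDomainType.

Lemma mul_row_tr_sum_sqr k (v : 'rV[R]_k) : (v *m v^T) 0 0 = \sum_j v 0 j ^+ 2.
Proof. by rewrite !mxE; apply: eq_bigr => j _; rewrite !mxE expr2. Qed.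

Lemma mul_row_tr_ge0 k (v : 'rV[R]_k) : 0 <= (v *m v^T) 0 0.
Proof. by rewrite mul_row_tr_sum_sqr; apply: sumr_ge0 => j _; apply: sqr_ge0. Qed.

Lemma mul_row_tr_eq0 k (v : 'rV[R]_k) : ((v *m v^T) 0 0 == 0) = (v == 0).
Proof.
apply/eqP/eqP => [|->]; last by rewrite mul0mx mxE.
rewrite mul_row_tr_sum_sqr => v2_eq0; apply/rowP => j; apply/eqP.
by rewrite mxE -sqrf_eq0 (psumr_eq0P _ v2_eq0) // => i _; apply: sqr_ge0.
Qed.

Lemma mul_row_tr_gt0 k (v : 'rV[R]_k) : (0 < (v *m v^T) 0 0) = (v != 0).
Proof. by rewrite lt_def mul_row_tr_ge0 mul_row_tr_eq0 andbT. Qed.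

Lemma mul_mx_tr_eq0 m k (X : 'M[R]_(m, k)) : (X *m X^T == 0) = (X == 0).
Proof.
apply/eqP/eqP => [XXt0|->]; last by rewrite mul0mx.
apply/row_matrixP => i; rewrite row0; apply/eqP; rewrite -mul_row_tr_eq0.
have -> : (row i X *m (row i X)^T) 0 0 = (X *m X^T) i i.
  by rewrite !mxE; apply: eq_bigr => j _; rewrite !mxE.
by rewrite XXt0 mxE.
Qed.

Lemma trace_gram_ge0 m k (A : 'M[R]_(m, k)) : 0 <= \tr (A^T *m A).
Proof.
apply: sumr_ge0 => j _; rewrite mxE; apply: sumr_ge0 => i _.
by rewrite mxE -expr2 sqr_ge0.
Qed.

Lemma CauchySchwarz_sum k (a b : 'I_k -> R) :
  (\sum_j a j * b j) ^+ 2 <= (\sum_j a j ^+ 2) * (\sum_j b j ^+ 2).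
Proof.
set s := \sum_j b j ^+ 2; set c := \sum_j a j * b j; set t := \sum_j a j ^+ 2.
have s_ge0 : 0 <= s by apply: sumr_ge0 => j _; apply: sqr_ge0.
have [s_eq0|s_neq0] := eqVneq s 0.
  have b0 j : b j = 0.
    by apply/eqP; rewrite -sqrf_eq0 (psumr_eq0P _ s_eq0) // => i _; apply: sqr_ge0.
  rewrite s_eq0 /c big1 ?expr0n ?mulr0 // => j _.
  by rewrite b0 mulr0.
have : 0 <= \sum_j (s * a j - c * b j) ^+ 2 by apply: sumr_ge0 => j _; apply: sqr_ge0.
have -> : \sum_j (s * a j - c * b j) ^+ 2 = s * (s * t - c ^+ 2).
  rewrite (eq_bigr (fun j =>
    s ^+ 2 * a j ^+ 2 + c ^+ 2 * b j ^+ 2 - 2 * s * c * (a j * b j))); last by move=> j _; ring.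
  by rewrite sumrB big_split /= -!mulr_sumr -/s -/c -/t; ring.
by rewrite pmulr_rge0 ?lt_def ?s_neq0 // subr_ge0 mulrC.
Qed.

Lemma mul_row_tr_le_trace n k (u : 'rV[R]_n) (A : 'M[R]_(n, k)) :
  ((u *m A) *m (u *m A)^T) 0 0 <= \tr (A^T *m A) * (u *m u^T) 0 0.
Proof.
rewrite !mul_row_tr_sum_sqr mulr_suml; apply: ler_sum => j _.
have -> : (A^T *m A) j j = \sum_i A i j ^+ 2.
  by rewrite mxE; apply: eq_bigr => i _; rewrite mxE expr2.
by rewrite mxE mulrC; apply: CauchySchwarz_sum.
Qed.

End SumsOfSquares.

Lemma gram_unitmx (R : realFieldType) m k (H : 'M[R]_(m, k)) :
  row_free H -> H *m H^T \in unitmx.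
Proof.
move=> H_free; rewrite -row_free_unit -kermx_eq0; set K := kermx _.
have : (K *m H) *m (K *m H)^T = 0.
  by rewrite trmx_mul mulmxA -(mulmxA K) mulmx_ker mul0mx.
by move/eqP; rewrite mul_mx_tr_eq0 mulmx_free_eq0.
Qed.

Section MoorePenrose.
Variable R : realType.

Lemma penrose_full_rank_factor m r k (F : 'M[R]_(m, r)) (H : 'M[R]_(r, k)) :
  row_free F^T -> row_free H ->
  penrose (F *m H) (H^T *m invmx (H *m H^T) *m invmx (F^T *m F) *m F^T).
Proof.
move=> F_free H_free.
have HHt_unit := gram_unitmx H_free.
have FtF_unit := gram_unitmx F_free; rewrite trmxK in FtF_unit.
set U := invmx (H *m H^T); set V := invmx (F^T *m F).
have Ut : U^T = U by rewrite /U trmx_inv trmx_mul trmxK.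
have Vt : V^T = V by rewrite /V trmx_inv trmx_mul trmxK.
have HU : H *m H^T *m U = 1%:M by apply: mulmxV.
have UH : U *m (H *m H^T) = 1%:M by apply: mulVmx.
have VF : V *m (F^T *m F) = 1%:M by apply: mulVmx.
set X := H^T *m U *m V *m F^T.
have AX : F *m H *m X = F *m V *m F^T.
  by rewrite /X !mulmxA -(mulmxA F H) -(mulmxA F) HU mulmx1.
have XA : X *m (F *m H) = H^T *m U *m H.
  by rewrite /X -!mulmxA (mulmxA F^T) (mulmxA V) VF mul1mx.
split.
- by rewrite AX -!mulmxA (mulmxA F^T) (mulmxA V) VF mul1mx.
- by rewrite XA /X !mulmxA -(mulmxA (H^T *m U) H H^T) -(mulmxA H^T U) UH mulmx1.
- by rewrite AX !trmx_mul trmxK Vt mulmxA.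
- by rewrite XA !trmx_mul trmxK Ut mulmxA.
Qed.

Lemma penrose_exists m k (A : 'M[R]_(m, k)) : exists X, penrose A X.
Proof.
have F_free : row_free (col_base A)^T.
  by rewrite /row_free mxrank_tr; apply: col_base_full.
rewrite -[A in penrose A]mulmx_base.
by eexists; apply: penrose_full_rank_factor (row_base_free A).
Qed.

Lemma mp_pinvP m k (A : 'M[R]_(m, k)) : penrose A (mp_pinv A).
Proof. exact: xgetPex (penrose_exists A). Qed.

End MoorePenrose.

Definition gram_proj (R : realType) n k (A : 'M[R]_(n, k)) : 'M[R]_n :=
  A *m mp_pinv (A^T *m A) *m A^T.

Section GramProjector.
Variables (R : realType) (n k : nat) (A : 'M[R]_(n, k)).

Lemma mulmx_gram_eq0 m (Y : 'M[R]_(k, m)) : A^T *m A *m Y = 0 -> A *m Y = 0.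
Proof.
move=> AtAY0; apply/eqP; rewrite -trmx_eq0 -mul_mx_tr_eq0 trmxK.
by rewrite trmx_mul -mulmxA (mulmxA A^T) AtAY0 mulmx0.
Qed.

Lemma mulmx_gram_pinv : A *m mp_pinv (A^T *m A) *m (A^T *m A) = A.
Proof.
have [+ _ _ _] := mp_pinvP (A^T *m A); move: (mp_pinv _) => X AtA_X_AtA.
apply/eqP; rewrite -subr_eq0; apply/eqP.
have -> : A *m X *m (A^T *m A) - A = A *m (X *m (A^T *m A) - 1%:M).
  by rewrite mulmxBr mulmx1 (mulmxA A X).
by apply: mulmx_gram_eq0; rewrite mulmxBr mulmx1 (mulmxA _ X) AtA_X_AtA subrr.
Qed.

Lemma gram_proj_mulmx : gram_proj A *m A = A.
Proof. by rewrite -mulmxA mulmx_gram_pinv. Qed.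

Lemma gram_proj_tr : (gram_proj A)^T = gram_proj A.
Proof.
rewrite /gram_proj; move: (mp_pinv _) mulmx_gram_pinv => X AXK.
have AtE : A^T = A^T *m A *m X^T *m A^T.
  by rewrite -{1}AXK !trmx_mul trmxK !mulmxA.
have PE : A *m X *m A^T = A *m X^T *m A^T.
  by rewrite {1}AtE !mulmxA -(mulmxA (A *m X)) AXK.
by rewrite {2}PE !trmx_mul !trmxK mulmxA.
Qed.

Lemma gram_proj_idem : gram_proj A *m gram_proj A = gram_proj A.
Proof.
have AtP : A^T *m gram_proj A = A^T.
  by rewrite -gram_proj_tr -trmx_mul gram_proj_mulmx.
by rewrite {1}/gram_proj -mulmxA AtP.
Qed.

Lemma gram_proj_bound (x : 'rV[R]_n) :
  ((x *m A) *m (x *m A)^T) 0 0 <= \tr (A^T *m A) * (x *m gram_proj A *m x^T) 0 0.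
Proof.
have -> : x *m gram_proj A *m x^T = (x *m gram_proj A) *m (x *m gram_proj A)^T.
  rewrite trmx_mul gram_proj_tr (mulmxA (x *m gram_proj A)).
  by rewrite -(mulmxA x (gram_proj A) (gram_proj A)) gram_proj_idem.
have -> : x *m A = x *m gram_proj A *m A by rewrite -mulmxA gram_proj_mulmx.
exact: mul_row_tr_le_trace.
Qed.

End GramProjector.

Section RealSymmetricSpectral.
Variable R : rcfType.
Local Open Scope complex_scope.
Local Notation toC := (map_mx (real_complex R)).

(* The spectral theorem of the library lives over an algebraically closed field,
   so N is diagonalised in R[i] and its (real) eigenvalues are read back in R. *)
Lemma sym_spectral n (N : 'M[R]_n) : N^T = N ->
  exists (Q : 'M[R[i]]_n) (d : 'rV[R]_n),
  [/\ (Q ^t*)%sesqui *m Q = 1%:M, toC N = Q *m diag_mx (toC d) *m (Q ^t*)%sesqui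
    & forall j, eigenvalue N (d 0 j)].
Proof.
move=> Nt; set NC := toC N.
have NC_herm : NC \is hermsymmx.
  apply: realsym_hermsym.
    by apply/is_hermitianmxP; rewrite expr0 scale1r map_mx_id // /NC map_trmx Nt.
  by apply/mxOverP => i j; rewrite mxE; apply/CrealP; apply: conjc_real.
have /orthomx_spectralP NC_spectral := hermitian_normalmx NC_herm.
have P_unitary := spectral_unitarymx NC.
have P_unit := spectral_unit NC.
have sp_real := hermitian_spectral_diag_real NC_herm.
set P := spectralmx NC in NC_spectral P_unitary P_unit.
set sp := spectral_diag NC in NC_spectral sp_real.
have sp_realE j : (complex.Re (sp 0 j))%:C = sp 0 j.
  by apply: RRe_real; move/mxOverP: sp_real; apply.
exists (P ^t*)%sesqui, (\row_j complex.Re (sp 0 j)).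
have -> : toC (\row_j complex.Re (sp 0 j)) = sp by apply/rowP => j; rewrite !mxE.
rewrite trmxCK; split.
- exact/unitarymxP.
- by rewrite NC_spectral invmx_unitary.
move=> j; rewrite mxE -(eigenvalue_map (real_complex R)) -/NC.
suff : eigenvalue NC (sp 0 j).
  by congr (is_true (eigenvalue _ _)); exact: (esym (sp_realE j)).
apply/eigenvalueP; exists (row j P).
  rewrite -row_mul NC_spectral !mulmxA mulmxV // mul1mx row_mul row_diag_mx.
  by rewrite -scalemxAl -rowE.
apply/eqP => Pj0; have : row j P *m invmx P = 0 by rewrite Pj0 mul0mx.
rewrite -row_mul mulmxV // row1 => /rowP /(_ j); rewrite !mxE !eqxx /=.
by move/eqP; rewrite oner_eq0.
Qed.

Lemma spectral_quad_form n (Q : 'M[R[i]]_n) (e : 'rV[R]_n) (Y : 'M[R]_n) (w : 'rV[R]_n) :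
  toC Y = Q *m diag_mx (toC e) *m (Q ^t*)%sesqui ->
  ((w *m Y *m w^T) 0 0)%:C = \sum_j (e 0 j)%:C * `|(toC w *m Q) 0 j| ^+ 2.
Proof.
move=> YE; set wC := toC w.
have -> : ((w *m Y *m w^T) 0 0)%:C = (wC *m toC Y *m wC^T) 0 0.
  by rewrite /wC map_trmx -!map_mxM [RHS]mxE.
have wCt : wC^T = map_mx Num.conj wC^T.
  by apply/matrixP => i j; rewrite !mxE; symmetry; apply: conjc_real.
rewrite YE wCt !mulmxA -(mulmxA _ (Q ^t*)%sesqui) -map_mxM -trmx_mul.
rewrite mxE; apply: eq_bigr => j _.
rewrite !mxE (bigD1 j) //= big1 ?addr0; last first.
  by move=> k kj; rewrite !mxE (negbTE kj) mulr0n mulr0.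
by rewrite !mxE eqxx mulr1n normCK; ring.
Qed.

Lemma sym_mx_neq0_eigenvalue n (N : 'M[R]_n) : N^T = N -> N != 0 ->
  exists a, eigenvalue N a /\ a != 0.
Proof.
move=> Nt; have [Q [d [_ NE d_eig]]] := sym_spectral Nt.
have [j dj_neq0|d0] := pickP (fun j => d 0 j != 0); first by exists (d 0 j).
rewrite -(map_mx_eq0 (real_complex R)) NE.
have -> : d = 0 by apply/rowP => j; rewrite mxE; move/negbFE/eqP: (d0 j).
by rewrite map_mx0 raddf0 mulmx0 mul0mx eqxx.
Qed.

End RealSymmetricSpectral.

Section SmallestPositiveEigenvalue.
Variable R : realType.

Lemma psd_gram m k (A : 'M[R]_(m, k)) : psd (A^T *m A).
Proof.
split=> [|v]; first by rewrite trmx_mul trmxK.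
have -> : v *m (A^T *m A) *m v^T = (v *m A^T) *m (v *m A^T)^T.
  by rewrite trmx_mul trmxK !mulmxA.
exact: mul_row_tr_ge0.
Qed.

Lemma psd_eigenvalue_ge0 n (N : 'M[R]_n) a : psd N -> eigenvalue N a -> 0 <= a.
Proof.
move=> [_ N_ge0] /eigenvalueP [v vN v_neq0].
have := N_ge0 v; rewrite vN -scalemxAl mxE.
by rewrite pmulr_lge0 // mul_row_tr_gt0.
Qed.

Lemma lambda_min_pos_le n (N : 'M[R]_n) a :
  psd N -> eigenvalue N a -> a != 0 -> lambda_min_pos N <= a.
Proof.
move=> Npsd Na a_neq0; apply: ge_inf; last by split.
by exists 0 => b [Nb _]; apply: psd_eigenvalue_ge0 Npsd Nb.
Qed.

Lemma lambda_min_pos_quad_le n (N : 'M[R]_n) (w : 'rV[R]_n) : psd N ->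
  lambda_min_pos N * (w *m N *m w^T) 0 0 <= (w *m (N *m N) *m w^T) 0 0.
Proof.
move=> Npsd; have [Q [d [QtQ NE d_eig]]] := sym_spectral Npsd.1.
have N2E : map_mx (real_complex R) (N *m N) =
    Q *m diag_mx (map_mx (real_complex R) (\row_j d 0 j ^+ 2)) *m (Q ^t*)%sesqui.
  rewrite map_mxM NE !mulmxA -(mulmxA _ (Q ^t*)%sesqui) QtQ mulmx1.
  rewrite -(mulmxA Q (diag_mx _) (diag_mx _)) mulmx_diag.
  by congr (_ *m diag_mx _ *m _); apply/rowP => j; rewrite !mxE rmorphXn expr2.
rewrite -lecR rmorphM /= (spectral_quad_form w NE) (spectral_quad_form w N2E).
rewrite mulr_sumr; apply: ler_sum => j _.
rewrite mulrA -rmorphM ler_wpM2r ?exprn_ge0 // lecR mxE.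
have dj_ge0 := psd_eigenvalue_ge0 Npsd (d_eig j).
have [->|dj_neq0] := eqVneq (d 0 j) 0; first by rewrite expr2 !mulr0.
by rewrite expr2 ler_wpM2r // lambda_min_pos_le.
Qed.

End SmallestPositiveEigenvalue.

Section ProjectorMixture.
Variables (R : realType) (n r : nat) (q : 'I_r -> nat).
Variables (A : forall i : 'I_r, 'M[R]_(n, q i)) (p : 'I_r -> R).
Local Notation AA := (\mxrow_j A j).
Local Notation T := (\tr (AA^T *m AA)).
Local Notation M := (\sum_i p i *: gram_proj (A i)).
Hypotheses (p_sum1 : \sum_i p i = 1)
  (pE : forall i, p i = \tr ((A i)^T *m A i) / T).

Lemma trace_mxrow_gram_gt0 : 0 < T.
Proof.
rewrite lt_def trace_gram_ge0 andbT; apply/eqP => T0; move: p_sum1.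
rewrite big1 => [/eqP|i _]; first by rewrite eq_sym oner_eq0.
by rewrite pE T0 invr0 mulr0.
Qed.

Lemma mxrow_quad_le_mixture (x : 'rV[R]_n) :
  ((x *m AA) *m (x *m AA)^T) 0 0 <= T * (x *m M *m x^T) 0 0.
Proof.
rewrite mul_mxrow tr_mxrow mul_mxrow_mxcol mulmx_sumr mulmx_suml !summxE mulr_sumr.
apply: ler_sum => i _; rewrite -scalemxAr -scalemxAl [X in _ * X]mxE mulrA.
have -> : T * p i = \tr ((A i)^T *m A i).
  by rewrite pE mulrC divfK // lt0r_neq0 // trace_mxrow_gram_gt0.
exact: gram_proj_bound.
Qed.

Lemma mixture_tr : M^T = M.
Proof. by rewrite linear_sum; apply: eq_bigr => i _; rewrite linearZ /= gram_proj_tr. Qed.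

Lemma mixture_neq0 : M != 0.
Proof.
apply/eqP => M0; suff AA0 : AA = 0.
  by move: trace_mxrow_gram_gt0; rewrite AA0 trmx0 mul0mx mxtrace0 ltxx.
apply/row_matrixP => i; rewrite row0 rowE; apply/eqP.
rewrite -mul_row_tr_eq0 eq_le mul_row_tr_ge0 andbT.
have := mxrow_quad_le_mixture (delta_mx 0 i).
by rewrite M0 mulmx0 mul0mx [X in _ * X]mxE mulr0.
Qed.

Lemma mulmx_mixture (x : 'rV[R]_n) :
  x *m M = \mxrow_i (p i *: (x *m A i *m mp_pinv ((A i)^T *m A i))) *m AA^T.
Proof.
rewrite tr_mxrow mul_mxrow_mxcol mulmx_sumr; apply: eq_bigr => i _.
by rewrite -scalemxAr -scalemxAl !mulmxA.
Qed.

Lemma mixture_eigenvalue_ge a :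
  eigenvalue M a -> a != 0 -> lambda_min_pos (AA^T *m AA) / T <= a.
Proof.
move=> /eigenvalueP [x xM x_neq0] a_neq0.
set w := a^-1 *: \mxrow_i (p i *: (x *m A i *m mp_pinv ((A i)^T *m A i))).
have xE : x = w *m AA^T by rewrite -scalemxAl -mulmx_mixture xM scalerA mulVf // scale1r.
have x2E : (x *m x^T) 0 0 = (w *m (AA^T *m AA) *m w^T) 0 0.
  by rewrite xE trmx_mul trmxK !mulmxA.
have xAA2E : ((x *m AA) *m (x *m AA)^T) 0 0 =
    (w *m ((AA^T *m AA) *m (AA^T *m AA)) *m w^T) 0 0.
  by rewrite xE !trmx_mul !trmxK !mulmxA.
have := mxrow_quad_le_mixture x.
rewrite xAA2E xM -(scalemxAl a x) [X in _ * X]mxE => le_xAA.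
have := le_trans (lambda_min_pos_quad_le w (psd_gram AA)) le_xAA.
rewrite -x2E mulrA ler_pM2r ?mul_row_tr_gt0 // => le_lambda.
by rewrite ler_pdivrMr ?trace_mxrow_gram_gt0 // mulrC.
Qed.

Lemma lambda_min_pos_mixture_ge : lambda_min_pos (AA^T *m AA) / T <= lambda_min_pos M.
Proof.
apply: lb_le_inf; first exact: sym_mx_neq0_eigenvalue mixture_tr mixture_neq0.
by move=> a [Ma a_neq0]; apply: mixture_eigenvalue_ge.
Qed.

End ProjectorMixture.

Unset Implicit Arguments.

Theorem theorem5 (R : realType) (n r : nat) (G : 'M[R]_n)
  (q : 'I_r -> nat) (S : forall i : 'I_r, 'M[R]_(n, q i)) (p : 'I_r -> R) :
  psd G ->
  (forall i, 0 < p i) ->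
  \sum_(i < r) p i = 1 ->
  (forall i, p i = \tr ((S i)^T *m (G *m G) *m S i) /
                   \tr ((\mxrow_(j < r) S j)^T *m (G *m G) *m (\mxrow_(j < r) S j))) ->
  lambda_min_pos (G *m (\sum_(i < r) p i *: (S i *m mp_pinv ((S i)^T *m (G *m G) *m S i) *m (S i)^T)) *m G)
  >= lambda_min_pos ((\mxrow_(j < r) S j)^T *m (G *m G) *m (\mxrow_(j < r) S j)) /
     \tr ((\mxrow_(j < r) S j)^T *m (G *m G) *m (\mxrow_(j < r) S j)).
Proof.
move=> [Gt _] _ p_sum1 pE.
have gramG m (Y : 'M[R]_(n, m)) : Y^T *m (G *m G) *m Y = (G *m Y)^T *m (G *m Y).
  by rewrite trmx_mul Gt !mulmxA.
have -> : G *m (\sum_i p i *: (S i *m mp_pinv ((S i)^T *m (G *m G) *m S i) *m (S i)^T)) *m G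
    = \sum_i p i *: gram_proj (G *m S i).
  rewrite mulmx_sumr mulmx_suml; apply: eq_bigr => i _.
  by rewrite -scalemxAr -scalemxAl gramG /gram_proj trmx_mul Gt !mulmxA.
rewrite !gramG mul_mxrow; apply: lambda_min_pos_mixture_ge p_sum1 _ => i.
by rewrite pE !gramG mul_mxrow.
Qed.
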